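(* Let $n\ge q\ge 2$ be integers and put $S_1=\sqrt{q^2+4(q-1)(n-2)}$. Let $d$ be an integer and define $j$ by $d=n-1-\frac{n-2+j}{q}$ (so $j=q(n-1-d)-n+2$), and assume $j\in\left[0,\frac{S_1-q}{2}\right)$. Put $s=1-\frac{2d}{n}$, $d_0=n-\frac{j(n-1)}{q(j+q-1)}$, and let $e$ be the unique rational number in $(0,1]$ such that $d_0+e$ is an integer. Define $$f(t)=\Big(t+1+\tfrac{2e}{n}-\tfrac{2j(n-1)}{nq(j+q-1)}\Big)\Big(t+1+\tfrac{2(e-1)}{n}-\tfrac{2j(n-1)}{nq(j+q-1)}\Big)(t-s),$$ and write its Krawtchouk expansion as $f(t)=f_0+f_1Q_1^{(n,q)}(t)+f_2Q_2^{(n,q)}(t)+f_3Q_3^{(n,q)}(t)$. Then $f_1>0$.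
   Context: For integers $n,q$ and $0\le i\le n$, the Krawtchouk polynomial is $K_i^{(n,q)}(z)=\sum_{l=0}^{i}(-1)^l(q-1)^{i-l}\binom{z}{l}\binom{n-z}{i-l}$, and the normalized Krawtchouk polynomial is $Q_i^{(n,q)}(t)=\frac{1}{r_i}K_i^{(n,q)}\!\big(\tfrac{n(1-t)}{2}\big)$ with $r_i=(q-1)^i\binom{n}{i}$; every real polynomial of degree $m\le n$ in $t$ has a unique expansion $\sum_{i=0}^m f_iQ_i^{(n,q)}(t)$. *)

From mathcomp Require Import all_boot all_order all_algebra.
Set Implicit Arguments. Unset Strict Implicit. Unset Printing Implicit Defensive.
Import Order.TTheory GRing.Theory Num.Theory.
Local Open Scope ring_scope.

Section Kraw.
Variable R : rcfType.

Definition binomp (p : {poly R}) (l : nat) : {poly R} :=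
  (l`!%:R)^-1 *: \prod_(k < l) (p - (k%:R)%:P).

Definition kraw_z (n : nat) : {poly R} := (n%:R / 2) *: (1 - 'X).

(* K_i^{(n,q)}(n(1-t)/2) as a polynomial in t *)
Definition kraw_K (n q i : nat) : {poly R} :=
  \sum_(l < i.+1)
     (((-1) ^+ l * (q%:R - 1) ^+ (i - l)) *:
        (binomp (kraw_z n) l * binomp ((n%:R)%:P - kraw_z n) (i - l))).

Definition kraw_r (n q i : nat) : R := (q%:R - 1) ^+ i * ('C(n, i))%:R.

Definition kraw_Q (n q i : nat) : {poly R} := (kraw_r n q i)^-1 *: kraw_K n q i.

End Kraw.

From mathcomp Require Import all_boot all_order all_algebra.
From mathcomp Require Import ring lra.
Import Order.TTheory GRing.Theory Num.Theory.
Set Implicit Arguments. Unset Strict Implicit. Unset Printing Implicit Defensive.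
Local Open Scope ring_scope.

(* The Krawtchouk polynomials Q_i, read as functions of
   z = n(1-t)/2, are orthogonal for the binomial law Z ~ Bin(n, p), p = 1 - 1/q,
   and Q_1(z) = 1 - z/mu with mu = np, so f_1 = q E[f(Z)(mu - Z)].  In the
   variable z, f = (8/n^3)(a - z)(a - 1 - z)(d - z) with a = d_0 + e, and the
   binomial central moments turn q E[f(Z)(mu - Z)] into (8/n^3)(n(q-1)/q) times
   a monic quadratic in a.  Its minimum is a positive multiple of
   4(q-1)(3n-2) + 8j - 4j^2 - 4jq - q^2, which is positive because
   j^2 + qj < (q-1)(n-2), i.e. because j lies below the root (S_1 - q)/2. *)

Section KrawtchoukValues.
Variable R : rcfType.
Implicit Types (x z N Q : R) (n q i l : nat).

Definition binomr x l : R := \prod_(k < l) (x - k%:R) / l`!%:R.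

Definition kraw_Kz N Q i z : R :=
  \sum_(l < i.+1)
     (-1) ^+ l * (Q - 1) ^+ (i - l) * binomr z l * binomr (N - z) (i - l).

Definition kraw_Qz N Q i z : R := kraw_Kz N Q i z / ((Q - 1) ^+ i * binomr N i).

Lemma horner_binomp (p : {poly R}) l x : (binomp p l).[x] = binomr p.[x] l.
Proof.
rewrite /binomp /binomr hornerZ horner_prod mulrC; congr (_ * _).
by apply: eq_bigr => k _; rewrite hornerD hornerN hornerC.
Qed.

Lemma horner_kraw_z n x : (kraw_z R n).[x] = n%:R / 2 * (1 - x).
Proof. by rewrite /kraw_z hornerZ hornerD hornerN hornerX hornerC. Qed.

Lemma kraw_zK n z : n%:R != 0 :> R -> (kraw_z R n).[1 - 2 * z / n%:R] = z.
Proof. by move=> n0; rewrite horner_kraw_z; field. Qed.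

Lemma horner_kraw_K n q i x :
  (kraw_K R n q i).[x] = kraw_Kz n%:R q%:R i (kraw_z R n).[x].
Proof.
rewrite /kraw_K /kraw_Kz horner_sum; apply: eq_bigr => l _.
by rewrite hornerZ hornerM !horner_binomp hornerD hornerN hornerC mulrA.
Qed.

Lemma natr_ffact n l : (n ^_ l)%:R = \prod_(k < l) (n%:R - k%:R) :> R.
Proof.
elim: l n => [|l IH] n; first by rewrite ffactn0 big_ord0.
rewrite big_ord_recl subr0; case: n => [|n]; first by rewrite ffact0n mul0r.
rewrite ffactSS natrM IH; congr (_ * _); apply: eq_bigr => k _.
by rewrite lift0 -!natr1 opprD addrACA subrr addr0.
Qed.

Lemma natr_bin n l : 'C(n, l)%:R = binomr n%:R l.
Proof.
by rewrite /binomr -natr_ffact -bin_ffact natrM mulfK // pnatr_eq0 -lt0n fact_gt0.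
Qed.

Lemma horner_kraw_Q n q i x :
  (kraw_Q R n q i).[x] = kraw_Qz n%:R q%:R i (kraw_z R n).[x].
Proof. by rewrite /kraw_Q hornerZ horner_kraw_K /kraw_r natr_bin mulrC. Qed.

Ltac expand_kraw_Kz :=
  rewrite /kraw_Kz /binomr !big_ord_recr /= ?big_ord_recr !big_ord0 /=;
  rewrite !factS fact0; field.

Lemma kraw_Kz1 N Q z : kraw_Kz N Q 1 z = (Q - 1) * (N - z) - z.
Proof. by expand_kraw_Kz. Qed.

Lemma kraw_Kz2 N Q z : kraw_Kz N Q 2 z =
  (Q - 1) ^+ 2 * ((N - z) * (N - z - 1) / 2) - (Q - 1) * z * (N - z)
  + z * (z - 1) / 2.
Proof. by expand_kraw_Kz. Qed.

Lemma kraw_Kz3 N Q z : kraw_Kz N Q 3 z =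
  (Q - 1) ^+ 3 * ((N - z) * (N - z - 1) * (N - z - 2) / 6)
  - (Q - 1) ^+ 2 * z * ((N - z) * (N - z - 1) / 2)
  + (Q - 1) * (z * (z - 1) / 2) * (N - z) - z * (z - 1) * (z - 2) / 6.
Proof. by expand_kraw_Kz. Qed.

Definition forward_diff (h : R -> R) z : R := h (z + 1) - h z.

Lemma eq_forward_diff k (g h : R -> R) :
  g =1 h -> iter k forward_diff g =1 iter k forward_diff h.
Proof. by move=> gh; elim: k => //= k IH z; rewrite /forward_diff !IH. Qed.

(* Newton's forward-difference series for E h(Z), Z ~ Bin(N, p), truncated
   after the fourth difference: it is exact when h is a polynomial of degree
   at most 4. *)
Definition binomial_mean4 N p (h : R -> R) : R :=
  \sum_(k < 5) binomr N k * p ^+ k * iter k forward_diff h 0.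

Definition kraw_coef1 N Q (g : R -> R) : R :=
  let p := (Q - 1) / Q in Q * binomial_mean4 N p (fun z => (N * p - z) * g z).

Lemma eq_kraw_coef1 N Q (g h : R -> R) :
  g =1 h -> kraw_coef1 N Q g = kraw_coef1 N Q h.
Proof.
move=> gh; rewrite /kraw_coef1 /binomial_mean4; congr (_ * _).
apply: eq_bigr => k _; congr (_ * _); apply: eq_forward_diff => z.
by rewrite gh.
Qed.

Lemma kraw_coef1_linear N Q a b c d (g1 g2 g3 : R -> R) :
  kraw_coef1 N Q (fun z => a + b * g1 z + c * g2 z + d * g3 z) =
  a * kraw_coef1 N Q (fun=> 1) + b * kraw_coef1 N Q g1
  + c * kraw_coef1 N Q g2 + d * kraw_coef1 N Q g3.
Proof.
rewrite /kraw_coef1; move: (_ / Q) => p.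
by rewrite /binomial_mean4 /forward_diff !big_ord_recr !big_ord0 /=; ring.
Qed.

Section Orthogonality.
Variables N Q : R.
Hypotheses (N0 : N != 0) (N1 : N - 1 != 0) (N2 : N - 2 != 0)
  (Q0 : Q != 0) (Q1 : Q - 1 != 0).

Ltac expand_kraw_coef1 :=
  rewrite /kraw_coef1 /binomial_mean4 /forward_diff /binomr;
  rewrite !big_ord_recr !big_ord0 /= !factS fact0;
  field; rewrite ?N0 ?N1 ?N2 ?Q0 ?Q1.

Lemma kraw_coef1_1 : kraw_coef1 N Q (fun=> 1) = 0.
Proof. by expand_kraw_coef1. Qed.

Lemma kraw_coef1_Q1 : kraw_coef1 N Q (kraw_Qz N Q 1) = 1.
Proof.
under eq_kraw_coef1 => z do rewrite /kraw_Qz kraw_Kz1.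
by expand_kraw_coef1.
Qed.

Lemma kraw_coef1_Q2 : kraw_coef1 N Q (kraw_Qz N Q 2) = 0.
Proof.
under eq_kraw_coef1 => z do rewrite /kraw_Qz kraw_Kz2.
by expand_kraw_coef1.
Qed.

Lemma kraw_coef1_Q3 : kraw_coef1 N Q (kraw_Qz N Q 3) = 0.
Proof.
under eq_kraw_coef1 => z do rewrite /kraw_Qz kraw_Kz3.
by expand_kraw_coef1.
Qed.

Lemma kraw_coef1_expansion f0 f1 f2 f3 :
  kraw_coef1 N Q (fun z => f0 + f1 * kraw_Qz N Q 1 z + f2 * kraw_Qz N Q 2 z
                           + f3 * kraw_Qz N Q 3 z) = f1.
Proof.
rewrite kraw_coef1_linear kraw_coef1_1 kraw_coef1_Q1 kraw_coef1_Q2.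
by rewrite kraw_coef1_Q3; ring.
Qed.

End Orthogonality.

(* The bracket is E[(a - Z)(b - Z)(c - Z)(mu - Z)] / Var Z, expanded through
   the central moments of the binomial law. *)
Lemma kraw_coef1_cubic N Q k a b c : Q != 0 ->
  let p := (Q - 1) / Q in let mu := N * p in
  kraw_coef1 N Q (fun z => k * ((a - z) * (b - z) * (c - z))) =
  k * (N * (Q - 1) / Q) *
  ((a - mu) * (b - mu) + (b - mu) * (c - mu) + (c - mu) * (a - mu)
   - (1 - 2 * p) * (a + b + c - 3 * mu) + 3 * mu * (1 - p) + 1
   - 6 * p * (1 - p)).
Proof.
move=> Q0 p mu; rewrite /kraw_coef1 /binomial_mean4 /binomr /forward_diff /mu /p.
rewrite !big_ord_recr !big_ord0 /= !factS fact0.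
by field; rewrite Q0.
Qed.

Lemma kraw_coef1_horner n q (f : {poly R}) f0 f1 f2 f3 :
  (2 < n)%N -> (1 < q)%N ->
  f = f0%:P + f1 *: kraw_Q R n q 1 + f2 *: kraw_Q R n q 2
      + f3 *: kraw_Q R n q 3 ->
  f1 = kraw_coef1 n%:R q%:R (fun z => f.[1 - 2 * z / n%:R]).
Proof.
move=> n_gt2 q_gt1 ->.
have [n2 q1] : 2 < n%:R :> R /\ 1 < q%:R :> R.
  by split; rewrite ?ltr_nat ?ltr1n.
have [n0 n1 n2' q0 q1'] : [/\ n%:R != 0 :> R, n%:R - 1 != 0 :> R,
    n%:R - 2 != 0 :> R, q%:R != 0 :> R & q%:R - 1 != 0 :> R].
  by split; apply: lt0r_neq0; lra.
rewrite -{1}(kraw_coef1_expansion n0 n1 n2' q0 q1' f0 f1 f2 f3).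
apply: eq_kraw_coef1 => z.
by rewrite !hornerD hornerC (hornerZ f1) (hornerZ f2) (hornerZ f3)
  !horner_kraw_Q kraw_zK.
Qed.

Lemma quad_lt_of_lt_pos_root b c x : 0 <= b -> 0 <= x ->
  x < (Num.sqrt (b ^+ 2 + 4 * c) - b) / 2 -> x ^+ 2 + b * x < c.
Proof.
move=> b0 x0 x_root; set D := b ^+ 2 + 4 * c.
have D0 : 0 < D by rewrite -sqrtr_gt0; lra.
have : (2 * x + b) ^+ 2 < D.
  by rewrite -(ltr_sqrt _ D0) sqrtr_sqr ger0_norm; lra.
rewrite /D; nra.
Qed.

Lemma kraw_coef1_vertex_gt0 (n q j : R) : 2 <= q -> q <= n -> 0 <= j ->
  j ^+ 2 + q * j < (q - 1) * (n - 2) ->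
  0 < 4 * (q - 1) * (3 * n - 2) + 8 * j - 4 * j ^+ 2 - 4 * j * q - q ^+ 2.
Proof.
move=> q2 qn j0 j_bound.
have : 0 <= (n - q) * (q - 1) by apply: mulr_ge0; lra.
have : 0 <= q * (q - 2) by apply: mulr_ge0; lra.
nra.
Qed.

End KrawtchoukValues.

Theorem lemma2 (R : rcfType) (n q : nat) (d : int) (e : R)
  (f0 f1 f2 f3 : R) :
  (2 <= q)%N -> (q <= n)%N ->
  let S1 : R := Num.sqrt (q%:R ^+ 2 + 4 * (q%:R - 1) * (n%:R - 2)) in
  let j : int := (q%:Z * (n%:Z - 1 - d) - n%:Z + 2)%R in
  (0 <= j)%R ->
  j%:~R < (S1 - q%:R) / 2 ->
  let jr : R := j%:~R in
  let s : R := 1 - 2 * d%:~R / n%:R in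
  let d0 : R := n%:R - jr * (n%:R - 1) / (q%:R * (jr + q%:R - 1)) in
  0 < e -> e <= 1 -> (exists k : int, d0 + e = k%:~R) ->
  let c : R := 2 * jr * (n%:R - 1) / (n%:R * q%:R * (jr + q%:R - 1)) in
  let f : {poly R} :=
    ('X + (1 + 2 * e / n%:R - c)%:P) *
    ('X + (1 + 2 * (e - 1) / n%:R - c)%:P) * ('X - s%:P) in
  f = f0%:P + f1 *: kraw_Q R n q 1 + f2 *: kraw_Q R n q 2
      + f3 *: kraw_Q R n q 3 ->
  0 < f1.
Proof.
move=> q2 qn S1 j j0 j_S1 jr s d0 _ _ _ c f f_kraw; fold jr in j_S1.
have [q2R qnR] : 2 <= q%:R :> R /\ q%:R <= n%:R :> R by split; rewrite ler_nat.
have jr0 : 0 <= jr by rewrite ler0z.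
have j_bound : jr ^+ 2 + q%:R * jr < (q%:R - 1) * (n%:R - 2).
  by apply: quad_lt_of_lt_pos_root; rewrite ?mulrA -/S1; lra.
have n2 : 2 < n%:R :> R by nra.
have [n0 q0 jq0] : [/\ n%:R != 0 :> R, q%:R != 0 :> R & jr + q%:R - 1 != 0].
  by split; apply: lt0r_neq0; lra.
have d_j : d%:~R = n%:R - 1 - (jr + n%:R - 2) / q%:R :> R.
  by rewrite /jr /j !(rmorphB, rmorphD, rmorphM) /= !pmulrn; field; rewrite q0.
have f_cubic z : f.[1 - 2 * z / n%:R] =
    8 / n%:R ^+ 3 * ((d0 + e - z) * (d0 + e - 1 - z) * (d%:~R - z)).
  rewrite /f /s /c /d0 !(hornerM, hornerD, hornerN, hornerX, hornerC).
  by field; rewrite n0 q0 jq0.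
pose vmin : R := (4 * (q%:R - 1) * (3 * n%:R - 2) + 8 * jr - 4 * jr ^+ 2
                - 4 * jr * q%:R - q%:R ^+ 2) / (4 * q%:R ^+ 2).
have vmin_gt0 : 0 < vmin.
  by rewrite divr_gt0 ?kraw_coef1_vertex_gt0 ?mulr_gt0 ?exprn_gt0 //; lra.
have -> : f1 = 8 / n%:R ^+ 3 * (n%:R * (q%:R - 1) / q%:R) *
    ((d0 + e - (n%:R - (n%:R - jr) / q%:R + 1 / 2)) ^+ 2 + vmin).
  rewrite (kraw_coef1_horner _ q2 f_kraw); last by rewrite -(ltr_nat R).
  rewrite (eq_kraw_coef1 _ _ f_cubic) kraw_coef1_cubic //.
  by rewrite d_j /d0 /vmin; field; rewrite q0 jq0 n0.
rewrite !mulr_gt0 ?invr_gt0 ?exprn_gt0 //; try lra.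
by rewrite ltr_wpDl ?sqr_ge0.
Qed.
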